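(* Let $d\ge3$ be an integer, $p_1,\dots,p_d\in(0,1)$, $q_j=1-p_j$, $P=\prod_{j=1}^dp_jq_j^{-1}$, and $\lambda\in(0,1)$. For every integer $n\ge N(P^{1/d},\lambda)$, $$\sum_{k=0}^n\binom nk^dP^k\le\left(\frac{M(P^{1/d},\lambda)}{\sqrt{2\pi}}\right)^{d-1}n^{-\frac{d-1}{2}}\left(1+P^{1/d}\right)^{dn}.$$
   Context: For $\alpha>0$, $\lambda\in(0,1)$: $N(\alpha,\lambda)=\max\{[\alpha/\lambda]+1,[1/(\lambda\alpha)]+1\}$, where $[x]$ is the greatest integer $\le x$, and $M(\alpha,\lambda)=\frac{\alpha+1}{\sqrt\alpha}\cdot\frac1{1-\lambda}$. *)

From Stdlib Require Import Reals Lra Lia ZArith List.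
Open Scope R_scope.

Definition floorZ (x : R) : Z := Int_part x.

(* N(alpha,lambda) = max{[alpha/lambda]+1, [1/(lambda alpha)]+1}; since
   alpha>0, lambda in (0,1) both arguments are positive, so this is a nat. *)
Definition Ncutoff (alpha lambda : R) : nat :=
  Nat.max (Z.to_nat (floorZ (alpha / lambda) + 1))
          (Z.to_nat (floorZ (1 / (lambda * alpha)) + 1)).

Definition Mbound (alpha lambda : R) : R :=
  (alpha + 1) / sqrt alpha * (1 / (1 - lambda)).

(* P = prod_{j=1}^d p_j / q_j, with q_j = 1 - p_j; p indexed 0..d-1 *)
Definition Pprod (d : nat) (p : nat -> R) : R :=
  fold_right Rmult 1 (map (fun j => p j / (1 - p j)) (seq 0 d)).

(* Write alpha = P^(1/d) and t_k = C(n,k) alpha^k: the k-th summand is t_k^d and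
   sum_k t_k = (1 + alpha)^n, so the sum is at most (max_k t_k)^(d-1) (1 + alpha)^n.
   The t_k increase up to the window n alpha - 1 <= k (1 + alpha) <= (n + 1) alpha and
   decrease after it, so it suffices to bound t_k for k in the window.  The Stirling ratio
   s_m = m! e^m / m^(m+1/2) decreases, to a limit that Wallis' integrals show is at least
   sqrt (2 pi); writing C(n,k) through s_n <= s_k and s_(n-k) >= sqrt (2 pi), and bounding the
   remaining power factor by Gibbs' inequality, gives t_k^2 <= n / (2 pi k (n-k)) (1 + alpha)^(2n).
   Finally the cut-off n >= N(alpha, lambda) forces k (n-k) >= n^2 alpha (1-lambda)^2 / (1+alpha)^2
   in the window, i.e. t_k <= M(alpha, lambda) / sqrt (2 pi n) (1 + alpha)^n. *)

From Stdlib Require Import Reals Lra Lia ZArith List.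
From Coquelicot Require Import Hierarchy Derive RInt RInt_analysis Continuity AutoDerive.
Open Scope R_scope.

Lemma le_of_derive_nonneg (f df : R -> R) (a b : R) : a <= b ->
  (forall x, a <= x <= b -> is_derive f x (df x)) ->
  (forall x, a <= x <= b -> 0 <= df x) -> f a <= f b.
Proof.
  intros Hab Hd Hpos.
  assert (Hmin : Rmin a b = a) by (apply Rmin_left; lra).
  assert (Hmax : Rmax a b = b) by (apply Rmax_right; lra).
  destruct (MVT_gen f a b df) as [c [Hc Heq]]; rewrite ?Hmin, ?Hmax in *.
  - intros x Hx. apply Hd. lra.
  - intros x Hx. apply continuity_pt_filterlim, (ex_derive_continuous f).
    exists (df x). apply Hd. lra.
  - assert (0 <= df c * (b - a)) by (apply Rmult_le_pos; [apply Hpos|]; lra).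
    lra.
Qed.

Lemma ln_1p_ge (y : R) : 0 <= y -> 2 * y / (2 + y) <= ln (1 + y).
Proof.
  intros Hy.
  pose (f x := ln (1 + x) - 2 * x / (2 + x)).
  assert (Hf : f 0 <= f y).
  { apply (le_of_derive_nonneg f (fun x => x ^ 2 / ((1 + x) * (2 + x) ^ 2))); auto.
    - intros x Hx. unfold f. auto_derive; [lra|field; lra].
    - intros x Hx. apply Rle_mult_inv_pos; [apply pow2_ge_0|].
      apply Rmult_lt_0_compat; [|apply pow_lt]; lra. }
  unfold f in Hf. rewrite Rplus_0_r, ln_1 in Hf. lra.
Qed.

Lemma ln_1p_le (y : R) : 0 <= y -> ln (1 + y) <= y - y ^ 2 / 2 + y ^ 3 / 3.
Proof.
  intros Hy.
  pose (f x := x - x ^ 2 / 2 + x ^ 3 / 3 - ln (1 + x)).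
  assert (Hf : f 0 <= f y).
  { apply (le_of_derive_nonneg f (fun x => x ^ 3 / (1 + x))); auto.
    - intros x Hx. unfold f. auto_derive; [lra|field; lra].
    - intros x Hx. apply Rle_mult_inv_pos; [apply pow_le|]; lra. }
  unfold f in Hf. rewrite Rplus_0_r, ln_1 in Hf. simpl in Hf. lra.
Qed.

Lemma ln_le_cancel (x y : R) : 0 < x -> 0 < y -> ln x <= ln y -> x <= y.
Proof.
  intros Hx Hy Hln. destruct (Rle_or_lt x y) as [|Hyx]; auto.
  pose proof (ln_increasing y x Hy Hyx). lra.
Qed.

(** * Wallis' integrals *)

Definition wallis_integral (n : nat) : R := RInt (fun x => sin x ^ n) 0 (PI / 2).

Lemma continuous_sin_pow (n : nat) (x : R) : continuous (fun x => sin x ^ n) x.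
Proof. apply (ex_derive_continuous (fun x => sin x ^ n)). auto_derive. trivial. Qed.

Lemma is_RInt_wallis_integral (n : nat) :
  is_RInt (fun x => sin x ^ n) 0 (PI / 2) (wallis_integral n).
Proof.
  apply (RInt_correct (V := R_CompleteNormedModule)), ex_RInt_continuous.
  intros x _. apply continuous_sin_pow.
Qed.

Lemma wallis_integral_rec (n : nat) :
  INR (n + 2) * wallis_integral (n + 2) = INR (n + 1) * wallis_integral n.
Proof.
  pose (g x := INR (n + 2) * sin x ^ (n + 2) - INR (n + 1) * sin x ^ n).
  assert (Hlin : is_RInt g 0 (PI / 2)
                   (INR (n + 2) * wallis_integral (n + 2) - INR (n + 1) * wallis_integral n)).
  { apply (is_RInt_minus (V := R_NormedModule));
      apply (is_RInt_scal (V := R_NormedModule)), is_RInt_wallis_integral. }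
  pose (F x := - cos x * sin x ^ (n + 1)).
  assert (Hftc : is_RInt g 0 (PI / 2) (minus (F (PI / 2)) (F 0))).
  { apply (is_RInt_derive F).
    - intros x _. unfold F, g. auto_derive; [trivial|].
      rewrite !plus_INR, Nat.add_1_r. simpl pred.
      pose proof (sin2_cos2 x) as Hsc. unfold Rsqr in Hsc.
      transitivity ((INR n + 2) * sin x ^ (n + 2)
                    - (INR n + 1) * sin x ^ n * (sin x * sin x + cos x * cos x));
        [rewrite pow_add; simpl; ring | rewrite Hsc; simpl; ring].
    - intros y _. apply (ex_derive_continuous g). unfold g. auto_derive. trivial. }
  assert (Hends : minus (F (PI / 2)) (F 0) = 0).
  { unfold F, minus, plus, opp. simpl. rewrite cos_PI2, sin_0, pow_i by lia. ring. }
  rewrite Hends in Hftc. pose proof (is_RInt_unique _ _ _ _ Hlin) as E1.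
  pose proof (is_RInt_unique _ _ _ _ Hftc) as E2. lra.
Qed.

Lemma wallis_integral_0 : wallis_integral 0 = PI / 2.
Proof.
  unfold wallis_integral. simpl. rewrite RInt_const.
  unfold scal. simpl. unfold mult. simpl. ring.
Qed.

Lemma wallis_integral_1 : wallis_integral 1 = 1.
Proof.
  unfold wallis_integral. apply is_RInt_unique.
  assert (E : minus (- cos (PI / 2)) (- cos 0) = 1).
  { unfold minus, plus, opp. simpl. rewrite cos_PI2, cos_0. ring. }
  rewrite <- E. apply (is_RInt_derive (fun x => - cos x)); intros x _.
  - auto_derive; [trivial | ring].
  - apply continuous_sin_pow.
Qed.

Lemma wallis_integral_S_le (n : nat) : wallis_integral (S n) <= wallis_integral n.
Proof.
  pose proof PI_RGT_0.
  unfold wallis_integral. apply RInt_le; [lra | | |].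
  1,2: apply (ex_RInt_continuous (V := R_CompleteNormedModule));
       intros y _; apply continuous_sin_pow.
  intros x Hx.
  assert (0 <= sin x) by (apply sin_ge_0; lra).
  pose proof (SIN_bound x). pose proof (pow_le (sin x) n ltac:(lra)).
  simpl. nra.
Qed.

Lemma C_pos (n k : nat) : 0 < C n k.
Proof.
  unfold C. apply Rdiv_lt_0_compat; [|apply Rmult_lt_0_compat]; apply INR_fact_lt_0.
Qed.

Definition wallis_prod (m : nat) : R := C (2 * m) m / 2 ^ (2 * m).

Lemma wallis_prod_S (m : nat) :
  wallis_prod (S m) * (2 * INR m + 2) = wallis_prod m * (2 * INR m + 1).
Proof.
  unfold wallis_prod, C.
  replace (2 * S m)%nat with (S (S (2 * m))) by lia.
  replace (S (S (2 * m)) - S m)%nat with (S m) by lia.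
  replace (2 * m - m)%nat with m by lia.
  rewrite !fact_simpl, !mult_INR, !S_INR, mult_INR. simpl (INR 2). rewrite <- !tech_pow_Rmult.
  pose proof (INR_fact_lt_0 m). pose proof (INR_fact_lt_0 (2 * m)). pose proof (pos_INR m).
  assert (0 < 2 ^ (2 * m)) by (apply pow_lt; lra).
  field. repeat split; lra.
Qed.

Lemma wallis_prod_pos (m : nat) : 0 < wallis_prod m.
Proof.
  unfold wallis_prod. apply Rdiv_lt_0_compat; [apply C_pos | apply pow_lt; lra].
Qed.

Lemma wallis_integral_even (m : nat) : wallis_integral (2 * m) = PI / 2 * wallis_prod m.
Proof.
  induction m as [|m IH].
  - change (2 * 0)%nat with 0%nat. rewrite wallis_integral_0. unfold wallis_prod, C. simpl. field.
  - pose proof (wallis_integral_rec (2 * m)) as Hrec.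
    replace (2 * m + 2)%nat with (2 * S m)%nat in Hrec by lia.
    assert (E1 : INR (2 * S m) = 2 * INR m + 2) by (rewrite mult_INR, (S_INR m); simpl; ring).
    assert (E2 : INR (2 * m + 1) = 2 * INR m + 1) by (rewrite plus_INR, mult_INR; simpl; ring).
    rewrite E1, E2, IH in Hrec. pose proof (pos_INR m).
    apply (Rmult_eq_reg_l (2 * INR m + 2)); [|lra].
    rewrite Hrec.
    replace ((2 * INR m + 2) * (PI / 2 * wallis_prod (S m)))
      with (PI / 2 * (wallis_prod (S m) * (2 * INR m + 2))) by ring.
    rewrite wallis_prod_S. ring.
Qed.

Lemma wallis_integral_odd (m : nat) :
  wallis_integral (2 * m + 1) * ((2 * INR m + 1) * wallis_prod m) = 1.
Proof.
  induction m as [|m IH].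
  - change (2 * 0 + 1)%nat with 1%nat. rewrite wallis_integral_1.
    unfold wallis_prod, C. simpl. field.
  - pose proof (wallis_integral_rec (2 * m + 1)) as Hrec.
    replace (2 * m + 1 + 2)%nat with (2 * S m + 1)%nat in Hrec by lia.
    assert (E1 : INR (2 * S m + 1) = 2 * INR (S m) + 1)
      by (rewrite plus_INR, mult_INR; simpl; ring).
    assert (E2 : INR (2 * m + 1 + 1) = 2 * INR m + 2)
      by (rewrite !plus_INR, mult_INR; simpl; ring).
    rewrite E1, E2 in Hrec. pose proof (pos_INR m).
    apply (Rmult_eq_reg_r (2 * INR m + 2)); [|lra].
    transitivity ((2 * INR (S m) + 1) * wallis_integral (2 * S m + 1)
                  * (wallis_prod (S m) * (2 * INR m + 2))); [ring|].
    rewrite wallis_prod_S, Hrec.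
    transitivity ((2 * INR m + 2)
                  * (wallis_integral (2 * m + 1) * ((2 * INR m + 1) * wallis_prod m))); [ring|].
    rewrite IH. ring.
Qed.

Lemma wallis_prod_sq_le (m : nat) : PI * INR m * wallis_prod m ^ 2 <= 1.
Proof.
  destruct m as [|m]; [simpl; lra|].
  pose proof (wallis_integral_S_le (2 * m + 1)) as Hle.
  replace (S (2 * m + 1)) with (2 * S m)%nat in Hle by lia.
  rewrite wallis_integral_even in Hle.
  assert (Hprod : PI / 2 * wallis_prod (S m) * (wallis_prod m * (2 * INR m + 1)) <= 1).
  { rewrite (Rmult_comm (wallis_prod m)). rewrite <- (wallis_integral_odd m) at 2.
    apply Rmult_le_compat_r; [|exact Hle].
    pose proof (wallis_prod_pos m). pose proof (pos_INR m).
    apply Rmult_le_pos; lra. }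
  replace (PI * INR (S m) * wallis_prod (S m) ^ 2)
    with (PI / 2 * wallis_prod (S m) * (wallis_prod (S m) * (2 * INR m + 2)))
    by (rewrite S_INR; field).
  rewrite wallis_prod_S. exact Hprod.
Qed.

(** * Stirling's lower bound *)

Definition ln_fact (m : nat) : R := ln (INR (fact m)).

Lemma ln_fact_S (m : nat) : ln_fact (S m) = ln (INR (S m)) + ln_fact m.
Proof.
  unfold ln_fact. rewrite fact_simpl, mult_INR, ln_mult; auto.
  - apply lt_0_INR. lia.
  - apply INR_fact_lt_0.
Qed.

Lemma ln_C (n k : nat) : ln (C n k) = ln_fact n - ln_fact k - ln_fact (n - k).
Proof.
  unfold C, ln_fact, Rdiv.
  pose proof (INR_fact_lt_0 n). pose proof (INR_fact_lt_0 k). pose proof (INR_fact_lt_0 (n - k)).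
  rewrite ln_mult, ln_Rinv, ln_mult; auto.
  - ring.
  - apply Rmult_lt_0_compat; auto.
  - apply Rinv_0_lt_compat, Rmult_lt_0_compat; auto.
Qed.

(* Twice the logarithm of the Stirling ratio m! e^m / m^(m + 1/2). *)
Definition stirling_gap (m : nat) : R :=
  2 * ln_fact m + 2 * INR m - (2 * INR m + 1) * ln (INR m).

Lemma stirling_gap_step (m : nat) : (1 <= m)%nat ->
  0 <= stirling_gap m - stirling_gap (S m) <= / INR m - / INR (S m).
Proof.
  intros Hm. rewrite S_INR. set (x := INR m).
  assert (Hx : 1 <= x) by (apply (le_INR 1); auto).
  assert (E : stirling_gap m - stirling_gap (S m) = (2 * x + 1) * ln (1 + / x) - 2).
  { unfold stirling_gap. rewrite ln_fact_S, S_INR. fold x.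
    replace (1 + / x) with ((x + 1) * / x) by (field; lra).
    rewrite ln_mult, ln_Rinv by (try apply Rinv_0_lt_compat; lra). ring. }
  assert (Hinv : 0 <= / x) by (apply Rlt_le, Rinv_0_lt_compat; lra).
  rewrite E. split.
  - pose proof (ln_1p_ge (/ x) Hinv) as Hlo.
    replace (2 * / x / (2 + / x)) with (2 / (2 * x + 1)) in Hlo by (field; lra).
    apply Rmult_le_compat_l with (r := 2 * x + 1) in Hlo; [|lra].
    replace ((2 * x + 1) * (2 / (2 * x + 1))) with 2 in Hlo by (field; lra). lra.
  - pose proof (ln_1p_le (/ x) Hinv) as Hhi.
    apply Rmult_le_compat_l with (r := 2 * x + 1) in Hhi; [|lra].
    replace ((2 * x + 1) * (/ x - (/ x) ^ 2 / 2 + (/ x) ^ 3 / 3))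
      with (2 + (x + 2) / (6 * x ^ 3)) in Hhi by (field; lra).
    assert (Hgap : / x - / (x + 1) - (x + 2) / (6 * x ^ 3)
                   = (5 * x + 2) * (x - 1) / (6 * x ^ 3 * (x + 1))) by (field; lra).
    assert (0 <= (5 * x + 2) * (x - 1) / (6 * x ^ 3 * (x + 1))).
    { apply Rle_mult_inv_pos; [apply Rmult_le_pos|]; try lra.
      apply Rmult_lt_0_compat; [apply Rmult_lt_0_compat; [|apply pow_lt]|]; lra. }
    lra.
Qed.

Lemma stirling_gap_telescope (m t : nat) : (1 <= m)%nat ->
  0 <= stirling_gap m - stirling_gap (m + t) <= / INR m - / INR (m + t).
Proof.
  intros Hm. induction t as [|t IH].
  - rewrite Nat.add_0_r. lra.
  - pose proof (stirling_gap_step (m + t) ltac:(lia)). rewrite <- plus_n_Sm. lra.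
Qed.

Lemma stirling_gap_wallis (m : nat) : (1 <= m)%nat ->
  ln (2 * PI) <= 2 * stirling_gap m - stirling_gap (2 * m).
Proof.
  intros Hm.
  assert (Hx : 1 <= INR m) by (apply (le_INR 1); auto).
  pose proof (wallis_prod_pos m) as Hw. pose proof PI_RGT_0.
  assert (Hw2 : 0 < INR m * wallis_prod m ^ 2) by (apply Rmult_lt_0_compat; [|apply pow_lt]; lra).
  assert (E : 2 * stirling_gap m - stirling_gap (2 * m) = ln (2 / (INR m * wallis_prod m ^ 2))).
  { assert (Hlnw : ln (wallis_prod m) = ln_fact (2 * m) - 2 * ln_fact m - 2 * INR m * ln 2).
    { unfold wallis_prod, Rdiv.
      rewrite ln_mult, ln_Rinv, ln_pow, ln_C, mult_INR by (try apply Rinv_0_lt_compat;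
        try apply pow_lt; try apply C_pos; lra).
      replace (2 * m - m)%nat with m by lia. simpl (INR 2). ring. }
    unfold Rdiv, stirling_gap. rewrite mult_INR.
    replace (INR 2) with 2 by (simpl; ring).
    rewrite (ln_mult 2 (/ _)), ln_Rinv, (ln_mult (INR m)), ln_pow, Hlnw, (ln_mult 2 (INR m))
      by (try apply Rinv_0_lt_compat; try apply pow_lt; lra).
    replace (INR 2) with 2 by (simpl; ring). ring. }
  rewrite E. apply Rcomplements.ln_le; [nra|].
  pose proof (wallis_prod_sq_le m).
  apply (Rmult_le_reg_r (INR m * wallis_prod m ^ 2)); auto.
  replace (2 / (INR m * wallis_prod m ^ 2) * (INR m * wallis_prod m ^ 2)) with 2
    by (field; lra).
  lra.
Qed.

Lemma le_of_le_plus_inv_INR (x y : R) (m : nat) :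
  (forall M, (m <= M)%nat -> (0 < M)%nat -> x <= y + / INR M) -> x <= y.
Proof.
  intros H. destruct (Rle_or_lt x y) as [|Hyx]; auto.
  destruct (archimed_cor1 (x - y)) as [N [HN HN0]]; [lra|].
  pose proof (H (N + m)%nat ltac:(lia) ltac:(lia)) as HM.
  assert (/ INR (N + m) <= / INR N).
  { apply Rinv_le_contravar; [apply lt_0_INR; auto|]. apply le_INR. lia. }
  lra.
Qed.

(* For M >= m: stirling_gap m >= stirling_gap M
     >= ln (2 PI) - (stirling_gap M - stirling_gap (2 M)) >= ln (2 PI) - / (2 M). *)
Lemma stirling_gap_ge (m : nat) : (1 <= m)%nat -> ln (2 * PI) <= stirling_gap m.
Proof.
  intros Hm. apply (le_of_le_plus_inv_INR _ _ m). intros M HmM HM.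
  pose proof (stirling_gap_wallis M HM).
  pose proof (stirling_gap_telescope M M HM) as Htail.
  pose proof (stirling_gap_telescope m (M - m) Hm) as Hhead.
  replace (M + M)%nat with (2 * M)%nat in Htail by lia.
  replace (m + (M - m))%nat with M in Hhead by lia.
  assert (0 < / INR (2 * M)) by (apply Rinv_0_lt_compat, lt_0_INR; lia).
  lra.
Qed.

Lemma ln_le_sub_1 (x : R) : 0 < x -> ln x <= x - 1.
Proof. intros Hx. pose proof (exp_ineq1_le (ln x)). rewrite exp_ln in *; lra. Qed.

(* Gibbs' inequality for the distributions (k, r)/(k + r) and (a, 1)/(1 + a). *)
Lemma entropy_le (k r a : R) : 0 < k -> 0 < r -> 0 < a ->
  k * ln a + (k + r) * ln (k + r) <= k * ln k + r * ln r + (k + r) * ln (1 + a).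
Proof.
  intros Hk Hr Ha.
  assert (Hk' : ln ((k + r) * a * / (k * (1 + a))) <= (k + r) * a * / (k * (1 + a)) - 1).
  { apply ln_le_sub_1, Rmult_lt_0_compat; [nra|]. apply Rinv_0_lt_compat. nra. }
  assert (Hr' : ln ((k + r) * / (r * (1 + a))) <= (k + r) * / (r * (1 + a)) - 1).
  { apply ln_le_sub_1, Rmult_lt_0_compat; [lra|]. apply Rinv_0_lt_compat. nra. }
  rewrite ln_mult, ln_mult, ln_Rinv, ln_mult in Hk' by (try apply Rinv_0_lt_compat; nra).
  rewrite ln_mult, ln_Rinv, ln_mult in Hr' by (try apply Rinv_0_lt_compat; nra).
  apply Rmult_le_compat_l with (r := k) in Hk'; [|lra].
  apply Rmult_le_compat_l with (r := r) in Hr'; [|lra].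
  assert (Hsum : k * ((k + r) * a * / (k * (1 + a)) - 1) + r * ((k + r) * / (r * (1 + a)) - 1) = 0)
    by (field; lra).
  lra.
Qed.

Lemma ln_C_le (n k : nat) : (1 <= k)%nat -> (k < n)%nat ->
  2 * ln (C n k) <= (2 * INR n + 1) * ln (INR n) - (2 * INR k + 1) * ln (INR k)
                   - (2 * INR (n - k) + 1) * ln (INR (n - k)) - ln (2 * PI).
Proof.
  intros Hk Hkn.
  assert (Hdecr : stirling_gap n <= stirling_gap k).
  { pose proof (stirling_gap_telescope k (n - k) Hk) as Ht.
    replace (k + (n - k))%nat with n in Ht by lia. lra. }
  pose proof (stirling_gap_ge (n - k) ltac:(lia)) as Hge.
  assert (HnE : INR n = INR k + INR (n - k)) by (rewrite <- plus_INR; f_equal; lia).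
  rewrite ln_C. unfold stirling_gap in Hdecr, Hge. rewrite HnE in Hdecr |- *. lra.
Qed.

Definition binom_term (n : nat) (a : R) (k : nat) : R := C n k * a ^ k.

Lemma binom_term_pos (n : nat) (a : R) (k : nat) : 0 < a -> 0 < binom_term n a k.
Proof. intros Ha. apply Rmult_lt_0_compat; [apply C_pos | apply pow_lt; auto]. Qed.

Lemma binom_term_sum (n : nat) (a : R) : sum_f_R0 (binom_term n a) n = (1 + a) ^ n.
Proof.
  rewrite Rplus_comm, binomial. apply sum_eq. intros i _.
  unfold binom_term. rewrite pow1. ring.
Qed.

Lemma binom_term_sq_le (n k : nat) (a : R) : (1 <= k)%nat -> (k < n)%nat -> 0 < a ->
  binom_term n a k ^ 2 <= INR n / (2 * PI * INR k * INR (n - k)) * (1 + a) ^ (2 * n).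
Proof.
  intros Hk Hkn Ha.
  assert (HK : 1 <= INR k) by (apply (le_INR 1); auto).
  assert (HR : 1 <= INR (n - k)) by (apply (le_INR 1); lia).
  assert (HnE : INR n = INR k + INR (n - k)) by (rewrite <- plus_INR; f_equal; lia).
  pose proof PI_RGT_0.
  pose proof (ln_C_le n k Hk Hkn) as HlnC.
  pose proof (entropy_le (INR k) (INR (n - k)) a ltac:(lra) ltac:(lra) Ha) as Hent.
  assert (Hden : 0 < 2 * PI * INR k * INR (n - k)).
  { apply Rmult_lt_0_compat; [apply Rmult_lt_0_compat|]; lra. }
  assert (Hlhs : ln (binom_term n a k ^ 2) = 2 * ln (C n k) + 2 * INR k * ln a).
  { rewrite ln_pow by (apply binom_term_pos; lra). unfold binom_term.
    rewrite ln_mult, ln_pow by (try apply C_pos; try apply pow_lt; lra).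
    replace (INR 2) with 2 by (simpl; ring). ring. }
  assert (Hrhs : ln (INR n / (2 * PI * INR k * INR (n - k)) * (1 + a) ^ (2 * n))
                 = ln (INR n) - ln (2 * PI) - ln (INR k) - ln (INR (n - k))
                   + 2 * INR n * ln (1 + a)).
  { assert (Hinv : 0 < / (2 * PI * INR k * INR (n - k))) by (apply Rinv_0_lt_compat, Hden).
    assert (Hfrac : 0 < INR n * / (2 * PI * INR k * INR (n - k)))
      by (apply Rmult_lt_0_compat; lra).
    unfold Rdiv.
    rewrite ln_mult, ln_mult, ln_Rinv, ln_pow, mult_INR, (ln_mult (2 * PI * INR k)),
      (ln_mult (2 * PI))
      by first [assumption | lra | apply pow_lt; lra | apply Rmult_lt_0_compat; lra].
    replace (INR 2) with 2 by (simpl; ring). ring. }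
  apply ln_le_cancel.
  - apply pow_lt, binom_term_pos, Ha.
  - apply Rmult_lt_0_compat; [apply Rdiv_lt_0_compat | apply pow_lt]; lra.
  - rewrite Hlhs, Hrhs. rewrite HnE in HlnC |- *. lra.
Qed.

Lemma binom_term_succ (n k : nat) (a : R) : (k < n)%nat ->
  binom_term n a (S k) * INR (S k) = binom_term n a k * (INR (n - k) * a).
Proof.
  intros Hkn. unfold binom_term, C.
  replace (n - k)%nat with (S (n - S k)) by lia.
  rewrite (fact_simpl k), (fact_simpl (n - S k)), !mult_INR.
  pose proof (INR_fact_lt_0 k). pose proof (INR_fact_lt_0 (n - S k)).
  pose proof (pos_INR k). pose proof (pos_INR (n - S k)).
  rewrite !S_INR. simpl pow. field. lra.
Qed.

Lemma binom_term_le_succ (n k : nat) (a : R) : 0 < a -> (k < n)%nat ->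
  INR k * (1 + a) <= INR n * a - 1 -> binom_term n a k <= binom_term n a (S k).
Proof.
  intros Ha Hkn Hk. pose proof (binom_term_succ n k a Hkn) as Hs.
  rewrite minus_INR in Hs by lia. rewrite S_INR in Hs.
  pose proof (binom_term_pos n a k Ha). pose proof (binom_term_pos n a (S k) Ha).
  pose proof (pos_INR k). nra.
Qed.

Lemma binom_term_succ_le (n k : nat) (a : R) : 0 < a -> (k < n)%nat ->
  (INR n + 1) * a <= INR (S k) * (1 + a) -> binom_term n a (S k) <= binom_term n a k.
Proof.
  intros Ha Hkn Hk. pose proof (binom_term_succ n k a Hkn) as Hs.
  rewrite minus_INR in Hs by lia. rewrite S_INR in Hs, Hk.
  pose proof (binom_term_pos n a k Ha). pose proof (binom_term_pos n a (S k) Ha).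
  pose proof (pos_INR k). nra.
Qed.

(* The terms increase before the window and decrease after it. *)
Lemma binom_term_le_of_mode (n : nat) (a B : R) : 0 < a ->
  (forall j, (j <= n)%nat -> INR n * a - 1 <= INR j * (1 + a) <= (INR n + 1) * a ->
             binom_term n a j <= B) ->
  forall k, (k <= n)%nat -> binom_term n a k <= B.
Proof.
  intros Ha Hmode.
  assert (Hright : forall k, (k <= n)%nat -> INR n * a - 1 <= INR k * (1 + a) ->
                             binom_term n a k <= B).
  { induction k as [|k IH]; intros Hk Hlo.
    - apply Hmode; auto. split; auto. simpl. pose proof (pos_INR n). nra.
    - destruct (Rle_lt_dec (INR (S k) * (1 + a)) ((INR n + 1) * a)) as [Hhi|Hhi].
      + apply Hmode; auto.
      + apply Rle_trans with (binom_term n a k).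
        * apply binom_term_succ_le; auto; lra.
        * apply IH; [lia|]. rewrite S_INR in Hhi. nra. }
  assert (Hleft : forall t k, (k + t = n)%nat -> binom_term n a k <= B).
  { induction t as [|t IH]; intros k Hk.
    - apply Hright; [lia|]. replace k with n by lia. pose proof (pos_INR n). nra.
    - destruct (Rle_lt_dec (INR n * a - 1) (INR k * (1 + a))) as [Hlo|Hlo].
      + apply Hright; auto. lia.
      + apply Rle_trans with (binom_term n a (S k)).
        * apply binom_term_le_succ; auto; [lia | lra].
        * apply IH. lia. }
  intros k Hk. apply (Hleft (n - k)%nat). lia.
Qed.

Lemma mode_window_prod_ge (n j a lambda : R) : 0 < a -> 0 < lambda < 1 ->
  a < lambda * n -> 1 < lambda * a * n ->
  n * a - 1 <= j * (1 + a) <= (n + 1) * a ->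
  n ^ 2 * a * (1 - lambda) ^ 2 <= j * (n - j) * (1 + a) ^ 2.
Proof.
  intros Ha Hl Han Hlan [Hlo Hhi].
  assert (Hj : n * a * (1 - lambda) <= j * (1 + a)) by nra.
  assert (Hnj : n * (1 - lambda) <= (n - j) * (1 + a)) by nra.
  assert (Hn : 0 < n) by nra.
  assert (H0j : 0 <= n * a * (1 - lambda)) by (apply Rmult_le_pos; [apply Rmult_le_pos|]; lra).
  assert (H0nj : 0 <= n * (1 - lambda)) by (apply Rmult_le_pos; lra).
  pose proof (Rmult_le_compat _ _ _ _ H0j H0nj Hj Hnj). lra.
Qed.

Lemma Mbound_sq (a lambda : R) : 0 < a -> lambda < 1 ->
  Mbound a lambda ^ 2 = (1 + a) ^ 2 / (a * (1 - lambda) ^ 2).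
Proof.
  intros Ha Hl. pose proof (sqrt_lt_R0 a Ha). unfold Mbound.
  replace (((a + 1) / sqrt a * (1 / (1 - lambda))) ^ 2)
    with ((1 + a) ^ 2 / (sqrt a ^ 2 * (1 - lambda) ^ 2)) by (field; lra).
  rewrite pow2_sqrt; lra.
Qed.

Lemma Mbound_pos (a lambda : R) : 0 < a -> lambda < 1 -> 0 < Mbound a lambda.
Proof.
  intros Ha Hl. unfold Mbound.
  apply Rmult_lt_0_compat; apply Rdiv_lt_0_compat; try apply sqrt_lt_R0; lra.
Qed.

Lemma binom_term_le_max (n : nat) (a lambda : R) : 0 < a -> 0 < lambda < 1 ->
  a < lambda * INR n -> 1 < lambda * a * INR n ->
  forall k, (k <= n)%nat ->
  binom_term n a k <= Mbound a lambda / sqrt (2 * PI) / sqrt (INR n) * (1 + a) ^ n.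
Proof.
  intros Ha Hl Han Hlan.
  set (B := Mbound a lambda / sqrt (2 * PI) / sqrt (INR n) * (1 + a) ^ n).
  pose proof PI_RGT_0.
  assert (Hn : 0 < INR n) by nra.
  assert (HB : 0 <= B).
  { apply Rmult_le_pos; [left | apply pow_le; lra].
    apply Rdiv_lt_0_compat; [apply Rdiv_lt_0_compat|]; try apply sqrt_lt_R0;
      try apply Mbound_pos; lra. }
  assert (HB2 : B ^ 2 = (1 + a) ^ 2 / (2 * PI * a * (1 - lambda) ^ 2 * INR n) * (1 + a) ^ (2 * n)).
  { unfold B. rewrite Nat.mul_comm, pow_mult.
    pose proof (sqrt_lt_R0 (2 * PI) ltac:(lra)). pose proof (sqrt_lt_R0 (INR n) Hn).
    replace ((Mbound a lambda / sqrt (2 * PI) / sqrt (INR n) * (1 + a) ^ n) ^ 2)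
      with (Mbound a lambda ^ 2 / (sqrt (2 * PI) ^ 2 * sqrt (INR n) ^ 2) * ((1 + a) ^ n) ^ 2)
      by (field; lra).
    rewrite Mbound_sq, !pow2_sqrt by lra. field. repeat split; nra. }
  apply binom_term_le_of_mode; auto.
  intros j Hj Hwin.
  assert (Hj1 : (1 <= j)%nat).
  { destruct j; [|lia]. simpl in Hwin. nra. }
  assert (Hjn : (j < n)%nat).
  { destruct (Nat.eq_dec j n) as [->|]; [nra | lia]. }
  pose proof (mode_window_prod_ge (INR n) (INR j) a lambda Ha Hl Han Hlan Hwin) as Hkey.
  rewrite <- minus_INR in Hkey by lia.
  assert (HJ : 1 <= INR j) by (apply (le_INR 1); auto).
  assert (HR : 1 <= INR (n - j)) by (apply (le_INR 1); lia).
  assert (Hcmp : INR n / (2 * PI * INR j * INR (n - j))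
                 <= (1 + a) ^ 2 / (2 * PI * a * (1 - lambda) ^ 2 * INR n)).
  { assert (Hdiff : (1 + a) ^ 2 / (2 * PI * a * (1 - lambda) ^ 2 * INR n)
                    - INR n / (2 * PI * INR j * INR (n - j))
                    = (INR j * INR (n - j) * (1 + a) ^ 2 - INR n ^ 2 * a * (1 - lambda) ^ 2)
                      / (2 * PI * a * (1 - lambda) ^ 2 * INR n * INR j * INR (n - j)))
      by (field; repeat split; nra).
    assert (0 <= (INR j * INR (n - j) * (1 + a) ^ 2 - INR n ^ 2 * a * (1 - lambda) ^ 2)
                 / (2 * PI * a * (1 - lambda) ^ 2 * INR n * INR j * INR (n - j))).
    { apply Rle_mult_inv_pos; [lra|].
      assert (0 < (1 - lambda) ^ 2) by (apply pow_lt; lra).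
      do 5 (apply Rmult_lt_0_compat; [|lra]). lra. }
    lra. }
  assert (Hsq : binom_term n a j ^ 2 <= B ^ 2).
  { rewrite HB2. eapply Rle_trans; [apply binom_term_sq_le; auto|].
    apply Rmult_le_compat_r; [apply pow_le; lra | exact Hcmp]. }
  pose proof (binom_term_pos n a j Ha). nra.
Qed.

Lemma sum_pow_le (x : nat -> R) (B : R) (N e : nat) :
  (forall k, (k <= N)%nat -> 0 <= x k <= B) ->
  sum_f_R0 (fun k => x k ^ S e) N <= B ^ e * sum_f_R0 x N.
Proof.
  intros Hx. rewrite scal_sum. apply sum_Rle. intros k Hk.
  destruct (Hx k Hk) as [H0 HB]. simpl.
  apply Rmult_le_compat_l; [exact H0 | apply pow_incr; lra].
Qed.

Lemma Pprod_pos (d : nat) (p : nat -> R) :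
  (forall j, (j < d)%nat -> 0 < p j < 1) -> 0 < Pprod d p.
Proof.
  intros Hp. unfold Pprod.
  assert (Hseq : forall j, In j (seq 0 d) -> 0 < p j < 1)
    by (intros j Hj; apply in_seq in Hj; apply Hp; lia).
  induction (seq 0 d) as [|j l IH]; simpl; [lra|].
  destruct (Hseq j (or_introl eq_refl)).
  apply Rmult_lt_0_compat; [apply Rdiv_lt_0_compat; lra|].
  apply IH. intros i Hi. apply Hseq. right. exact Hi.
Qed.

Lemma floorZ_succ_gt (x : R) : 0 <= x -> x < INR (Z.to_nat (floorZ x + 1)).
Proof.
  intros Hx. unfold floorZ. destruct (base_Int_part x) as [Hle Hgt].
  assert (0 <= Int_part x + 1)%Z by (apply le_IZR; rewrite plus_IZR; simpl; lra).
  rewrite INR_IZR_INZ, Z2Nat.id, plus_IZR by lia. simpl (IZR 1). lra.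
Qed.

Lemma Ncutoff_spec (a lambda : R) (n : nat) : 0 < a -> 0 < lambda < 1 ->
  (Ncutoff a lambda <= n)%nat -> a < lambda * INR n /\ 1 < lambda * a * INR n.
Proof.
  intros Ha Hl Hn. unfold Ncutoff in Hn.
  assert (H1 : a / lambda < INR n).
  { eapply Rlt_le_trans; [apply floorZ_succ_gt; left; apply Rdiv_lt_0_compat; lra|].
    apply le_INR. lia. }
  assert (H2 : 1 / (lambda * a) < INR n).
  { eapply Rlt_le_trans; [apply floorZ_succ_gt; left; apply Rdiv_lt_0_compat; [lra | nra]|].
    apply le_INR. lia. }
  split.
  - apply (Rmult_lt_compat_l lambda) in H1; [|lra].
    replace (lambda * (a / lambda)) with a in H1 by (field; lra). lra.
  - apply (Rmult_lt_compat_l (lambda * a)) in H2; [|nra].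
    replace (lambda * a * (1 / (lambda * a))) with 1 in H2 by (field; lra). lra.
Qed.

Lemma Rpower_neg_half (x : R) (m : nat) : 0 < x -> Rpower x (- INR m / 2) = (/ sqrt x) ^ m.
Proof.
  intros Hx.
  replace (- INR m / 2) with (/ 2 * - INR m) by field.
  rewrite <- Rpower_mult, Rpower_sqrt, Rpower_Ropp, Rpower_pow, pow_inv by auto using sqrt_lt_R0.
  reflexivity.
Qed.

Theorem proposition14 (d : nat) (p : nat -> R) (lambda : R) :
  (3 <= d)%nat ->
  (forall j, (j < d)%nat -> 0 < p j < 1) ->
  0 < lambda < 1 ->
  let P := Pprod d p in
  let alpha := Rpower P (1 / INR d) in
  forall n : nat, le (Ncutoff alpha lambda) n ->
    sum_f_R0 (fun k => (C n k) ^ d * P ^ k) n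
    <= (Mbound alpha lambda / sqrt (2 * PI)) ^ (d - 1)
       * Rpower (INR n) (- (INR d - 1) / 2)
       * (1 + alpha) ^ (d * n).
Proof.
  intros Hd Hp Hl P alpha n Hn.
  assert (HP : 0 < P) by apply Pprod_pos, Hp.
  assert (Ha : 0 < alpha) by apply exp_pos.
  assert (HaP : alpha ^ d = P).
  { assert (HdR : 0 < INR d) by (apply lt_0_INR; lia).
    unfold alpha. rewrite <- Rpower_pow, Rpower_mult by apply exp_pos.
    replace (1 / INR d * INR d) with 1 by (field; lra). apply Rpower_1, HP. }
  destruct (Ncutoff_spec alpha lambda n Ha Hl Hn) as [Han Hlan].
  assert (HnR : 0 < INR n) by nra.
  set (B := Mbound alpha lambda / sqrt (2 * PI) / sqrt (INR n) * (1 + alpha) ^ n).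
  assert (Hterms : forall k, C n k ^ d * P ^ k = binom_term n alpha k ^ S (d - 1)).
  { intros k. replace (S (d - 1)) with d by lia. unfold binom_term.
    rewrite <- HaP, Rpow_mult_distr, <- !pow_mult, Nat.mul_comm. reflexivity. }
  rewrite (sum_eq _ _ n (fun k _ => Hterms k)).
  eapply Rle_trans.
  { apply (sum_pow_le _ B). intros k Hk. split.
    - left. apply binom_term_pos, Ha.
    - apply binom_term_le_max; auto. }
  replace (INR d - 1) with (INR (d - 1)) by (rewrite minus_INR by lia; reflexivity).
  rewrite binom_term_sum, Rpower_neg_half by exact HnR.
  replace (d * n)%nat with (n * (d - 1) + n)%nat by nia.
  unfold B, Rdiv. rewrite pow_add, pow_mult, !Rpow_mult_distr. right. ring.
Qed.
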